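(* For all integers $i,j,k,m\ge0$: if $\omega_i+\omega_j-\omega_m=0$, or $\omega_i-\omega_j+\omega_m=0$, or $-\omega_i+\omega_j+\omega_m=0$, then $\overline{\mathfrak{C}}_{ijm}=0$; and if $\omega_i+\omega_j+\omega_k-\omega_m=0$, or $\omega_i+\omega_j-\omega_k+\omega_m=0$, or $\omega_i-\omega_j+\omega_k+\omega_m=0$, or $-\omega_i+\omega_j+\omega_k+\omega_m=0$, then $\mathfrak{C}_{ijkm}=0$.
   Context: $\omega_n=n+2$. $\mathfrak{e}_n(x)=\mathfrak{N}_nP_n^{(3/2,3/2)}(\cos x)$ with $P_n^{(3/2,3/2)}$ the Jacobi polynomial and $\mathfrak{N}_n=\frac{\sqrt{\omega_n\Gamma(1+n)\Gamma(4+n)}}{2\sqrt2\,\Gamma(5/2+n)}$. $\overline{\mathfrak{C}}_{ijm}=\int_0^\pi\mathfrak{e}_i\mathfrak{e}_j\mathfrak{e}_m\sin^4x\,dx$, $\mathfrak{C}_{ijkm}=\int_0^\pi\mathfrak{e}_i\mathfrak{e}_j\mathfrak{e}_k\mathfrak{e}_m\sin^6x\,dx$. *)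

From Stdlib Require Import Reals Arith.
From Coquelicot Require Import Coquelicot.
Open Scope R_scope.

Definition omega (n : nat) : R := INR n + 2.

(* Euler's Gamma function, Gamma(s) = int_0^oo t^(s-1) e^(-t) dt
   (used only at arguments s >= 1, where the integrand is continuous). *)
Definition Gamma (s : R) : R :=
  RInt_gen (fun t => Rpower t (s - 1) * exp (- t))
           (at_point 0) (Rbar_locally p_infty).

Fixpoint falling (a : R) (k : nat) : R :=
  match k with
  | O => 1
  | S k' => falling a k' * (a - INR k')
  end.
Definition gbinom (a : R) (k : nat) : R := falling a k / INR (Factorial.fact k).

Definition jacobiP (al be : R) (n : nat) (x : R) : R :=
  sum_f_R0 (fun s => gbinom (INR n + al) (n - s) * gbinom (INR n + be) s
                     * ((x - 1) / 2) ^ s * ((x + 1) / 2) ^ (n - s)) n.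

Definition normN (n : nat) : R :=
  sqrt (omega n * Gamma (1 + INR n) * Gamma (4 + INR n))
  / (2 * sqrt 2 * Gamma (5 / 2 + INR n)).

Definition efun (n : nat) (x : R) : R := normN n * jacobiP (3/2) (3/2) n (cos x).

Definition Cbar (i j m : nat) : R :=
  RInt (fun x => efun i x * efun j x * efun m x * sin x ^ 4) 0 PI.

Definition C4 (i j k m : nat) : R :=
  RInt (fun x => efun i x * efun j x * efun k x * efun m x * sin x ^ 6) 0 PI.

(* Since e_n is a multiple of P_n^(3/2,3/2)(cos x) and sin^4 x = (1 - cos x)^2 (1 + cos x)^2,
   both vanishing statements are instances of the orthogonality of P_n^(3/2,3/2)(cos x),
   under the weight sin^4 x on [0, pi], to every polynomial in cos x of degree < n: each
   resonance condition makes one index exceed the degree in cos x of the product of the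
   remaining factors (sin^2 x counting as degree 2).
   Orthogonality to (1 - cos x)^r, r < n, is checked on the explicit expansion of P_n.
   Every term becomes a beta integral
     int_0^pi (1 - cos x)^a (1 + cos x)^b dx = pi 2^(a+b) (1/2)_a (1/2)_b / (a+b)!,
   which follows from two linear recurrences in (a, b) (the identity
   (1 - cos) + (1 + cos) = 2 and an integration by parts against sin x) together with the
   value pi at a = b = 0. After this evaluation the sum is a constant multiple of
   sum_s (-1)^s C(n,s) f(s) with f a polynomial of degree r < n, an n-th finite
   difference, hence zero. *)

From Stdlib Require Import Reals Arith Lra Lia.
From Coquelicot Require Import Coquelicot.
Open Scope R_scope.
Set Bullet Behavior "Strict Subproofs".

Lemma falling_add (z : R) (a b : nat) :
  falling z (a + b) = falling z a * falling (z - INR a) b.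
Proof.
  induction b as [|b IH].
  - rewrite Nat.add_0_r; simpl; ring.
  - rewrite Nat.add_succ_r; simpl; rewrite IH, plus_INR; ring.
Qed.

Lemma falling_succ_shift (z : R) (r : nat) :
  falling (z + 1) (S r) = (z + 1) * falling z r.
Proof.
  induction r as [|r IH]; [simpl; ring|].
  change (falling (z + 1) (S (S r))) with (falling (z + 1) (S r) * (z + 1 - INR (S r))).
  rewrite IH, S_INR; simpl; ring.
Qed.

Lemma C_n_0 (n : nat) : Binomial.C n 0 = 1.
Proof.
  unfold Binomial.C; replace (n - 0)%nat with n by lia; simpl.
  field; apply INR_fact_neq_0.
Qed.

Lemma C_n_n (n : nat) : Binomial.C n n = 1.
Proof.
  unfold Binomial.C; rewrite Nat.sub_diag; simpl.
  field; apply INR_fact_neq_0.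
Qed.

Lemma sum_C_succ (g : nat -> R) (n : nat) :
  sum_f_R0 (fun s => Binomial.C (S n) s * g s) (S n) =
  sum_f_R0 (fun s => Binomial.C n s * (g s + g (S s))) n.
Proof.
  destruct n as [|n].
  { simpl; rewrite !C_n_0, C_n_n; ring. }
  rewrite (sum_eq (fun s => Binomial.C (S n) s * (g s + g (S s)))
            (fun s => Binomial.C (S n) s * g s + Binomial.C (S n) s * g (S s)))
    by (intros; ring).
  rewrite plus_sum, !(decomp_sum (fun s => Binomial.C _ s * g s)) by lia.
  simpl pred. rewrite !tech5, !C_n_0, !C_n_n.
  rewrite (sum_eq (fun s => Binomial.C (S (S n)) (S s) * g (S s))
            (fun s => Binomial.C (S n) s * g (S s) + Binomial.C (S n) (S s) * g (S s)))
    by (intros s Hs; rewrite <- pascal by lia; ring).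
  rewrite plus_sum; ring.
Qed.

Lemma alternating_sum_C_falling (c : R) (n r : nat) : (r < n)%nat ->
  sum_f_R0 (fun s => (-1) ^ s * Binomial.C n s * falling (INR s + c) r) n = 0.
Proof.
  revert r; induction n as [|n IH]; intros r Hr; [lia|].
  rewrite (sum_eq _ (fun s => Binomial.C (S n) s * ((-1) ^ s * falling (INR s + c) r)))
    by (intros; ring).
  rewrite sum_C_succ.
  destruct r as [|r].
  - apply sum_eq_R0; intros s _; simpl; ring.
  - rewrite (sum_eq _ (fun s => (-1) ^ s * Binomial.C n s * falling (INR s + c) r * - INR (S r))).
    + rewrite <- scal_sum, IH by lia; ring.
    + intros s _.
      replace (INR (S s) + c) with (INR s + c + 1) by (rewrite S_INR; ring).
      rewrite falling_succ_shift; cbn [falling pow]; rewrite S_INR; ring.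
Qed.

(* Coquelicot states these over a normed module, whose carrier, [plus] and [scal] do not
   match [R], [Rplus] and [Rmult] syntactically; that blocks [rewrite] and [ring]. *)
Lemma RInt_ext_R (f g : R -> R) (a b : R) : (forall x, f x = g x) ->
  RInt f a b = RInt g a b.
Proof. intros H; apply RInt_ext; intros x _; apply H. Qed.

Lemma RInt_plus_R (f g : R -> R) (a b : R) : ex_RInt f a b -> ex_RInt g a b ->
  RInt (fun x => f x + g x) a b = RInt f a b + RInt g a b.
Proof. exact (RInt_plus f g a b). Qed.

Lemma RInt_scal_R (f : R -> R) (a b k : R) : ex_RInt f a b ->
  RInt (fun x => k * f x) a b = k * RInt f a b.
Proof. exact (RInt_scal f a b k). Qed.

Lemma RInt_sum_f_R0 (G : nat -> R -> R) (n : nat) (a b : R) :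
  (forall s, ex_RInt (G s) a b) ->
  RInt (fun x => sum_f_R0 (fun s => G s x) n) a b = sum_f_R0 (fun s => RInt (G s) a b) n.
Proof.
  intros HG; induction n as [|n IH]; [reflexivity|].
  assert (Hsum : ex_RInt (fun x => sum_f_R0 (fun s => G s x) n) a b).
  { clear IH; induction n as [|n IHn]; [apply HG|].
    exact (ex_RInt_plus _ (G (S n)) a b IHn (HG (S n))). }
  simpl; rewrite RInt_plus_R, IH; auto.
Qed.

Inductive poly_cos : nat -> (R -> R) -> Prop :=
  | poly_cos_monomial d a r f :
      (r <= d)%nat -> (forall x, f x = a * (1 - cos x) ^ r) -> poly_cos d f
  | poly_cos_add d f g h :
      poly_cos d f -> poly_cos d g -> (forall x, h x = f x + g x) -> poly_cos d h.

Lemma poly_cos_ext d f g : poly_cos d f -> (forall x, f x = g x) -> poly_cos d g.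
Proof.
  intros Hf; revert g; induction Hf as [d a r f Hr Hfx | d f1 f2 f Hf1 _ Hf2 _ Hfx];
    intros g Hg.
  - apply (poly_cos_monomial d a r); auto; intros x; rewrite <- Hg; auto.
  - apply (poly_cos_add d f1 f2); auto; intros x; rewrite <- Hg; auto.
Qed.

Lemma poly_cos_weaken d d' f : (d <= d')%nat -> poly_cos d f -> poly_cos d' f.
Proof.
  intros Hd Hf; induction Hf as [d a r f Hr Hfx | d f1 f2 f _ IH1 _ IH2 Hfx].
  - apply (poly_cos_monomial d' a r); auto; lia.
  - apply (poly_cos_add d' f1 f2); auto.
Qed.

Lemma poly_cos_mul_monomial d f a r : poly_cos d f ->
  poly_cos (r + d) (fun x => a * (1 - cos x) ^ r * f x).
Proof.
  induction 1 as [d b r' f Hr' Hf | d f1 f2 f _ IH1 _ IH2 Hf].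
  - apply (poly_cos_monomial _ (a * b) (r + r')); [lia|].
    intros x; rewrite Hf, pow_add; ring.
  - apply (poly_cos_add _ _ _ _ IH1 IH2); intros x; rewrite Hf; ring.
Qed.

Lemma poly_cos_scal d f a : poly_cos d f -> poly_cos d (fun x => a * f x).
Proof.
  intros Hf; apply (poly_cos_ext _ _ _ (poly_cos_mul_monomial d f a 0 Hf)).
  intros x; simpl; ring.
Qed.

Lemma poly_cos_mul d1 d2 f g : poly_cos d1 f -> poly_cos d2 g ->
  poly_cos (d1 + d2) (fun x => f x * g x).
Proof.
  intros Hf Hg; induction Hf as [d1 a r f Hr Hfx | d1 f1 f2 f _ IH1 _ IH2 Hfx].
  - apply (poly_cos_weaken (r + d2)); [lia|].
    apply (poly_cos_ext _ _ _ (poly_cos_mul_monomial d2 g a r Hg)).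
    intros x; rewrite Hfx; ring.
  - apply (poly_cos_add _ _ _ _ IH1 IH2); intros x; rewrite Hfx; ring.
Qed.

Lemma poly_cos_pow d f n : poly_cos d f -> poly_cos (n * d) (fun x => f x ^ n).
Proof.
  intros Hf; induction n as [|n IH].
  - apply (poly_cos_monomial 0 1 0); auto; intros; simpl; ring.
  - exact (poly_cos_mul _ _ _ _ Hf IH).
Qed.

Lemma poly_cos_sum d (G : nat -> R -> R) n :
  (forall s, (s <= n)%nat -> poly_cos d (G s)) ->
  poly_cos d (fun x => sum_f_R0 (fun s => G s x) n).
Proof.
  induction n as [|n IH]; intros HG; [apply HG; auto|].
  apply (poly_cos_add d _ (G (S n)) _ (IH (fun s Hs => HG s (le_S _ _ Hs)))); auto.
Qed.

Lemma poly_cos_one_sub_cos : poly_cos 1 (fun x => 1 - cos x).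
Proof. apply (poly_cos_monomial 1 1 1); auto; intros; simpl; ring. Qed.

Lemma poly_cos_one_add_cos : poly_cos 1 (fun x => 1 + cos x).
Proof.
  apply (poly_cos_add 1 (fun _ => 2) (fun x => -1 * (1 - cos x) ^ 1)).
  - apply (poly_cos_monomial 1 2 0); auto; intros; simpl; ring.
  - apply (poly_cos_monomial 1 (-1) 1); auto.
  - intros; simpl; ring.
Qed.

Lemma poly_cos_continuous d f x : poly_cos d f -> continuous f x.
Proof.
  induction 1 as [d a r f _ Hf | d f1 f2 f _ IH1 _ IH2 Hf].
  - apply (continuous_ext (fun x => a * (1 - cos x) ^ r)); [intros; auto|].
    apply (ex_derive_continuous (V := R_NormedModule)); auto_derive; auto.
  - apply (continuous_ext (fun x => plus (f1 x) (f2 x))); [intros; rewrite Hf; auto|].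
    apply (@continuous_plus R_UniformSpace R_AbsRing R_NormedModule); auto.
Qed.

Lemma ex_RInt_poly_cos d f a b : poly_cos d f -> ex_RInt f a b.
Proof.
  intros Hf; apply (ex_RInt_continuous (V := R_CompleteNormedModule)).
  intros; apply (poly_cos_continuous d), Hf.
Qed.

Definition cos_weight (p q : nat) (x : R) : R := (1 - cos x) ^ p * (1 + cos x) ^ q.

Lemma poly_cos_cos_weight p q : poly_cos (p + q) (cos_weight p q).
Proof.
  replace (p + q)%nat with (p * 1 + q * 1)%nat by lia.
  apply poly_cos_mul; apply poly_cos_pow;
    [apply poly_cos_one_sub_cos | apply poly_cos_one_add_cos].
Qed.

Lemma INR_mul_pow_pred (n : nat) (y : R) : INR n * y ^ Nat.pred n * y = INR n * y ^ n.
Proof. destruct n; simpl; ring. Qed.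

Lemma sin_sqr_cos (x : R) : sin x ^ 2 = (1 - cos x) * (1 + cos x).
Proof. pose proof (sin2_cos2 x) as H; unfold Rsqr in H; simpl; nra. Qed.

Lemma is_derive_cos_weight_sin (a b : nat) (x : R) :
  is_derive (fun y => cos_weight a b y * sin y) x
    ((INR a + 1/2) * cos_weight a (S b) x - (INR b + 1/2) * cos_weight (S a) b x).
Proof.
  unfold cos_weight; auto_derive; auto.
  change (1 + - cos x) with (1 - cos x).
  set (A := 1 - cos x); set (B := 1 + cos x).
  transitivity (sin x ^ 2 * (INR a * A ^ pred a * B ^ b - INR b * A ^ a * B ^ pred b)
                + A ^ a * B ^ b * cos x); [ring|].
  rewrite sin_sqr_cos; fold A B.
  transitivity (B * (INR a * A ^ pred a * A) * B ^ b - A * A ^ a * (INR b * B ^ pred b * B)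
                + A ^ a * B ^ b * cos x); [ring|].
  rewrite !INR_mul_pow_pred; unfold A, B; simpl pow; field.
Qed.

Lemma RInt_cos_weight_succ_add a b :
  RInt (cos_weight (S a) b) 0 PI + RInt (cos_weight a (S b)) 0 PI =
  2 * RInt (cos_weight a b) 0 PI.
Proof.
  rewrite <- RInt_plus_R, <- RInt_scal_R by (eapply ex_RInt_poly_cos, poly_cos_cos_weight).
  apply RInt_ext_R; intros x; unfold cos_weight; simpl; ring.
Qed.

Lemma RInt_cos_weight_parts a b :
  (2 * INR a + 1) * RInt (cos_weight a (S b)) 0 PI =
  (2 * INR b + 1) * RInt (cos_weight (S a) b) 0 PI.
Proof.
  set (F y := cos_weight a b y * sin y).
  assert (HF : is_RInt (fun x => (INR a + 1/2) * cos_weight a (S b) x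
                               + - (INR b + 1/2) * cos_weight (S a) b x) 0 PI
                 (minus (F PI) (F 0))).
  { apply (is_RInt_derive (V := R_CompleteNormedModule)); intros x _.
    - replace (_ + _) with ((INR a + 1/2) * cos_weight a (S b) x
                            - (INR b + 1/2) * cos_weight (S a) b x) by ring.
      apply is_derive_cos_weight_sin.
    - apply (ex_derive_continuous (V := R_NormedModule)); unfold cos_weight; auto_derive; auto. }
  assert (HF0 : minus (F PI) (F 0) = 0).
  { unfold F; rewrite sin_PI, sin_0, !Rmult_0_r.
    exact (minus_eq_zero (G := R_AbelianGroup) 0). }
  rewrite HF0 in HF; apply (is_RInt_unique (V := R_CompleteNormedModule)) in HF.
  rewrite RInt_plus_R, !RInt_scal_R in HF
    by (eapply ex_RInt_poly_cos; try apply poly_cos_scal; apply poly_cos_cos_weight).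
  lra.
Qed.

(* [falling (INR a - 1/2) a] is the rising factorial (1/2)_a. *)
Definition cos_beta (a b : nat) : R :=
  2 ^ (a + b) * falling (INR a - 1/2) a * falling (INR b - 1/2) b / INR (fact (a + b)).

Lemma falling_half_succ (a : nat) :
  falling (INR (S a) - 1/2) (S a) = (INR a + 1/2) * falling (INR a - 1/2) a.
Proof.
  replace (INR (S a) - 1/2) with (INR a - 1/2 + 1) by (rewrite S_INR; ring).
  rewrite falling_succ_shift; field.
Qed.

Lemma cos_beta_succ_add a b : cos_beta (S a) b + cos_beta a (S b) = 2 * cos_beta a b.
Proof.
  unfold cos_beta; rewrite !falling_half_succ, Nat.add_succ_r; simpl Nat.add.
  change (fact (S (a + b))) with (S (a + b) * fact (a + b))%nat.
  rewrite mult_INR, S_INR, plus_INR; simpl pow.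
  pose proof (INR_fact_neq_0 (a + b)); pose proof (pos_INR a); pose proof (pos_INR b).
  field; split; [auto | lra].
Qed.

Lemma cos_beta_parts a b :
  (2 * INR a + 1) * cos_beta a (S b) = (2 * INR b + 1) * cos_beta (S a) b.
Proof.
  unfold cos_beta; rewrite !falling_half_succ, Nat.add_succ_r; simpl Nat.add.
  pose proof (INR_fact_neq_0 (S (a + b))); field; auto.
Qed.

Lemma two_recurrences_zero (u : nat -> nat -> R) :
  u 0%nat 0%nat = 0 ->
  (forall a b, u (S a) b + u a (S b) = 2 * u a b) ->
  (forall a b, (2 * INR a + 1) * u a (S b) = (2 * INR b + 1) * u (S a) b) ->
  forall a b, u a b = 0.
Proof.
  intros H00 Hadd Hparts.
  assert (Hstep : forall a b, u a b = 0 -> u (S a) b = 0 /\ u a (S b) = 0).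
  { intros a b Hab; specialize (Hadd a b); specialize (Hparts a b).
    pose proof (pos_INR a); pose proof (pos_INR b).
    assert (Hz : (2 * INR a + 2 * INR b + 2) * u a (S b) = 0) by nra.
    apply Rmult_integral in Hz; destruct Hz as [Hz | Hz]; [lra | split; lra]. }
  induction a as [|a IH]; intros b.
  - induction b as [|b IHb]; [exact H00 | exact (proj2 (Hstep 0%nat b IHb))].
  - exact (proj1 (Hstep a b (IH b))).
Qed.

Lemma RInt_cos_weight a b : RInt (cos_weight a b) 0 PI = PI * cos_beta a b.
Proof.
  apply Rminus_diag_uniq; revert a b.
  apply (two_recurrences_zero (fun a b => RInt (cos_weight a b) 0 PI - PI * cos_beta a b)).
  - rewrite (RInt_ext_R _ (fun _ => 1)) by (intros; unfold cos_weight; simpl; ring).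
    rewrite RInt_const; change (scal (PI - 0) 1) with ((PI - 0) * 1).
    unfold cos_beta; simpl; field.
  - intros a b; pose proof (RInt_cos_weight_succ_add a b); pose proof (cos_beta_succ_add a b).
    nra.
  - intros a b; rewrite !Rmult_minus_distr_l, RInt_cos_weight_parts.
    rewrite <- !Rmult_assoc, !(Rmult_comm _ PI), !Rmult_assoc, cos_beta_parts; ring.
Qed.

Definition jacobi_coef (al be : R) (n s : nat) : R :=
  gbinom (INR n + al) (n - s) * gbinom (INR n + be) s * (-1/2) ^ s * (1/2) ^ (n - s).

Lemma jacobiP_cos al be n x :
  jacobiP al be n (cos x) = sum_f_R0 (fun s => jacobi_coef al be n s * cos_weight s (n - s) x) n.
Proof.
  unfold jacobiP; apply sum_eq; intros s _; unfold jacobi_coef, cos_weight.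
  replace ((cos x - 1) / 2) with (-1/2 * (1 - cos x)) by field.
  replace ((cos x + 1) / 2) with (1/2 * (1 + cos x)) by field.
  rewrite !Rpow_mult_distr; ring.
Qed.

Lemma poly_cos_jacobiP al be n : poly_cos n (fun x => jacobiP al be n (cos x)).
Proof.
  apply (poly_cos_ext n
           (fun x => sum_f_R0 (fun s => jacobi_coef al be n s * cos_weight s (n - s) x) n)).
  - apply poly_cos_sum; intros s Hs.
    apply (poly_cos_weaken (s + (n - s))); [lia|].
    apply poly_cos_scal, poly_cos_cos_weight.
  - intros x; symmetry; apply jacobiP_cos.
Qed.

Lemma jacobi_coef_cos_beta p q n r : exists K, forall s, (s <= n)%nat ->
  jacobi_coef (INR p - 1/2) (INR q - 1/2) n s * cos_beta (s + r + p) (n - s + q) =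
  K * ((-1) ^ s * Binomial.C n s * falling (INR s + (INR r + INR p - 1/2)) r).
Proof.
  exists (2 ^ (n + r + p + q) * (1/2) ^ n
          * falling (INR n + (INR p - 1/2)) (n + p) * falling (INR n + (INR q - 1/2)) (n + q)
          / (INR (fact (n + r + p + q)) * INR (fact n))).
  intros s Hs.
  assert (F1 : falling (INR (s + r + p) - 1/2) (s + r + p) =
               falling (INR s + (INR r + INR p - 1/2)) r
               * falling (INR s + INR p - 1/2) (s + p)).
  { replace (INR s + INR p - 1/2) with (INR s + (INR r + INR p - 1/2) - INR r) by field.
    replace (INR s + (INR r + INR p - 1/2)) with (INR (s + r + p) - 1/2)
      by (rewrite !plus_INR; field).
    rewrite <- falling_add; f_equal; lia. }
  assert (F2 : falling (INR n + (INR p - 1/2)) (n + p) =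
               falling (INR n + (INR p - 1/2)) (n - s)
               * falling (INR s + INR p - 1/2) (s + p)).
  { replace (INR s + INR p - 1/2) with (INR n + (INR p - 1/2) - INR (n - s))
      by (rewrite minus_INR by lia; field).
    rewrite <- falling_add; f_equal; lia. }
  assert (F3 : falling (INR n + (INR q - 1/2)) (n + q) =
               falling (INR n + (INR q - 1/2)) s
               * falling (INR (n - s + q) - 1/2) (n - s + q)).
  { replace (INR (n - s + q) - 1/2) with (INR n + (INR q - 1/2) - INR s)
      by (rewrite plus_INR, minus_INR by lia; field).
    rewrite <- falling_add; f_equal; lia. }
  unfold jacobi_coef, cos_beta, gbinom, Binomial.C.
  replace (s + r + p + (n - s + q))%nat with (n + r + p + q)%nat by lia.
  rewrite F1, F2, F3.
  replace ((-1/2) ^ s) with ((-1) ^ s * (1/2) ^ s)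
    by (rewrite <- Rpow_mult_distr; f_equal; field).
  replace ((1/2) ^ n) with ((1/2) ^ s * (1/2) ^ (n - s)) by (rewrite <- pow_add; f_equal; lia).
  pose proof (INR_fact_neq_0 s); pose proof (INR_fact_neq_0 (n - s)).
  pose proof (INR_fact_neq_0 n); pose proof (INR_fact_neq_0 (n + r + p + q)).
  field; repeat split; auto.
Qed.

Lemma RInt_jacobiP_cos_monomial p q n r : (r < n)%nat ->
  RInt (fun x => jacobiP (INR p - 1/2) (INR q - 1/2) n (cos x) * (1 - cos x) ^ r
                 * cos_weight p q x) 0 PI = 0.
Proof.
  intros Hr; destruct (jacobi_coef_cos_beta p q n r) as [K HK].
  rewrite (RInt_ext_R _ (fun x => sum_f_R0 (fun s =>
             jacobi_coef (INR p - 1/2) (INR q - 1/2) n s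
             * cos_weight (s + r + p) (n - s + q) x) n)).
  2:{ intros x; rewrite jacobiP_cos, Rmult_assoc, Rmult_comm, scal_sum.
      apply sum_eq; intros s _; unfold cos_weight; rewrite !pow_add; ring. }
  rewrite RInt_sum_f_R0 by (intros; eapply ex_RInt_poly_cos, poly_cos_scal, poly_cos_cos_weight).
  rewrite (sum_eq _ (fun s => (-1) ^ s * Binomial.C n s
                               * falling (INR s + (INR r + INR p - 1/2)) r * (PI * K))).
  - rewrite <- scal_sum, (alternating_sum_C_falling _ _ _ Hr); apply Rmult_0_r.
  - intros s Hs.
    rewrite RInt_scal_R, RInt_cos_weight, <- Rmult_assoc, (Rmult_comm _ PI), Rmult_assoc, HK
      by (auto; eapply ex_RInt_poly_cos, poly_cos_cos_weight).
    ring.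
Qed.

Lemma ex_RInt_jacobiP_mul al be n d f p q a b : poly_cos d f ->
  ex_RInt (fun x => jacobiP al be n (cos x) * f x * cos_weight p q x) a b.
Proof.
  intros Hf; eapply ex_RInt_poly_cos, poly_cos_mul; [|apply poly_cos_cos_weight].
  apply poly_cos_mul; [apply poly_cos_jacobiP | exact Hf].
Qed.

Lemma RInt_jacobiP_cos_orthogonal p q n d f : poly_cos d f -> (d < n)%nat ->
  RInt (fun x => jacobiP (INR p - 1/2) (INR q - 1/2) n (cos x) * f x * cos_weight p q x)
    0 PI = 0.
Proof.
  intros Hf Hd; induction Hf as [d a r f Hr Hfx | d f1 f2 f Hf1 IH1 Hf2 IH2 Hfx].
  - assert (Hmono : poly_cos r (fun x => (1 - cos x) ^ r))
      by (apply (poly_cos_monomial r 1 r); auto; intros; ring).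
    rewrite (RInt_ext_R _ (fun x => a * (jacobiP (INR p - 1/2) (INR q - 1/2) n (cos x)
                                       * (1 - cos x) ^ r * cos_weight p q x)))
      by (intros x; rewrite Hfx; ring).
    rewrite RInt_scal_R, RInt_jacobiP_cos_monomial
      by (lia || exact (ex_RInt_jacobiP_mul _ _ _ _ _ _ _ _ _ Hmono)).
    apply Rmult_0_r.
  - rewrite (RInt_ext_R _ (fun x =>
                 jacobiP (INR p - 1/2) (INR q - 1/2) n (cos x) * f1 x * cos_weight p q x
               + jacobiP (INR p - 1/2) (INR q - 1/2) n (cos x) * f2 x * cos_weight p q x))
      by (intros x; rewrite Hfx; ring).
    rewrite RInt_plus_R, IH1, IH2 by (auto || eapply ex_RInt_jacobiP_mul; eassumption).
    apply Rplus_0_r.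
Qed.

Lemma poly_cos_efun n : poly_cos n (efun n).
Proof. apply poly_cos_scal, poly_cos_jacobiP. Qed.

Lemma poly_cos_sin_sqr : poly_cos 2 (fun x => sin x ^ 2).
Proof.
  apply (poly_cos_ext _ _ _ (poly_cos_mul 1 1 _ _ poly_cos_one_sub_cos poly_cos_one_add_cos)).
  intros x; rewrite sin_sqr_cos; reflexivity.
Qed.

Lemma RInt_efun_orthogonal n d f : poly_cos d f -> (d < n)%nat ->
  RInt (fun x => efun n x * f x * sin x ^ 4) 0 PI = 0.
Proof.
  intros Hf Hd.
  rewrite (RInt_ext_R _ (fun x => normN n * (jacobiP (INR 2 - 1/2) (INR 2 - 1/2) n (cos x)
                                          * f x * cos_weight 2 2 x))).
  - rewrite RInt_scal_R, (RInt_jacobiP_cos_orthogonal _ _ _ d)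
      by (auto || exact (ex_RInt_jacobiP_mul _ _ _ _ _ _ _ _ _ Hf)).
    apply Rmult_0_r.
  - intros x; unfold efun, cos_weight.
    replace (INR 2 - 1/2) with (3/2) by (simpl; field).
    replace (sin x ^ 4) with ((sin x ^ 2) ^ 2) by ring.
    rewrite sin_sqr_cos; ring.
Qed.

Lemma Cbar_swap12 i j m : Cbar i j m = Cbar j i m.
Proof. apply RInt_ext_R; intros; ring. Qed.

Lemma Cbar_swap23 i j m : Cbar i j m = Cbar i m j.
Proof. apply RInt_ext_R; intros; ring. Qed.

Lemma C4_swap12 i j k m : C4 i j k m = C4 j i k m.
Proof. apply RInt_ext_R; intros; ring. Qed.

Lemma C4_swap23 i j k m : C4 i j k m = C4 i k j m.
Proof. apply RInt_ext_R; intros; ring. Qed.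

Lemma C4_swap34 i j k m : C4 i j k m = C4 i j m k.
Proof. apply RInt_ext_R; intros; ring. Qed.

Lemma Cbar_eq0_of_lt i j m : (i + j < m)%nat -> Cbar i j m = 0.
Proof.
  intros Hm; unfold Cbar.
  rewrite (RInt_ext_R _ (fun x => efun m x * (efun i x * efun j x) * sin x ^ 4)) by (intros; ring).
  apply (RInt_efun_orthogonal m (i + j)); [apply poly_cos_mul; apply poly_cos_efun | exact Hm].
Qed.

Lemma C4_eq0_of_lt i j k m : (i + j + k + 2 < m)%nat -> C4 i j k m = 0.
Proof.
  intros Hm; unfold C4.
  rewrite (RInt_ext_R _ (fun x =>
             efun m x * (efun i x * efun j x * efun k x * sin x ^ 2) * sin x ^ 4))
    by (intros; ring).
  apply (RInt_efun_orthogonal m (i + j + k + 2)); [|exact Hm].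
  apply poly_cos_mul; [apply poly_cos_mul; [apply poly_cos_mul|]|];
    apply poly_cos_efun || apply poly_cos_sin_sqr.
Qed.

Lemma omega_add_lt i j m : omega i + omega j = omega m -> (i + j < m)%nat.
Proof. unfold omega; intros H; apply INR_lt; rewrite plus_INR; lra. Qed.

Lemma omega_add3_lt i j k m :
  omega i + omega j + omega k = omega m -> (i + j + k + 2 < m)%nat.
Proof. unfold omega; intros H; apply INR_lt; rewrite !plus_INR; simpl INR; lra. Qed.

Theorem lemma5p7 (i j k m : nat) :
  ((omega i + omega j - omega m = 0 \/
    omega i - omega j + omega m = 0 \/
    - omega i + omega j + omega m = 0) -> Cbar i j m = 0) /\
  ((omega i + omega j + omega k - omega m = 0 \/
    omega i + omega j - omega k + omega m = 0 \/
    omega i - omega j + omega k + omega m = 0 \/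
    - omega i + omega j + omega k + omega m = 0) -> C4 i j k m = 0).
Proof.
  split.
  - intros [H | [H | H]].
    + apply Cbar_eq0_of_lt, omega_add_lt; lra.
    + rewrite Cbar_swap23; apply Cbar_eq0_of_lt, omega_add_lt; lra.
    + rewrite Cbar_swap12, Cbar_swap23; apply Cbar_eq0_of_lt, omega_add_lt; lra.
  - intros [H | [H | [H | H]]].
    + apply C4_eq0_of_lt, omega_add3_lt; lra.
    + rewrite C4_swap34; apply C4_eq0_of_lt, omega_add3_lt; lra.
    + rewrite C4_swap23, C4_swap34; apply C4_eq0_of_lt, omega_add3_lt; lra.
    + rewrite C4_swap12, C4_swap23, C4_swap34; apply C4_eq0_of_lt, omega_add3_lt; lra.
Qed.
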